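(* Let $G$ be a finite group and $p$ a prime. The categories $\mathcal S^*_G,\mathcal T^*_G,\mathcal L^*_G,\mathcal F^*_G,\widetilde{\mathcal F}^*_G,\mathcal O^*_G$ have Euler characteristics in the sense of Leinster, and \[ \chi(\mathcal C^* )=\sum_{[H]}\frac{-\mu(H)}{|\mathcal C^*(H)|},\qquad \mathcal C^*=\mathcal T^*_G,\ \mathcal L^*_G,\ \mathcal F^*_G, \] where the sum runs over the set of $G$-conjugacy classes $[H]$ of nonidentity $p$-subgroups $H$ of $G$. Moreover $\chi(\mathcal S^*_G)=|G|\,\chi(\mathcal T^*_G)$, $\chi(\widetilde{\mathcal F}^*_G)=\chi(\mathcal F^*_G)$, and \[ \chi(\mathcal O^*_G)=\chi(\mathcal T^*_G)+\frac{p-1}{p}\sum_{[C]\text{ cyclic}}\frac{1}{|\mathcal O^*_G(C)|}, \] where the last sum runs over the set of $G$-conjugacy classes of nonidentity cyclic $p$-subgroups $C$ of $G$.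
   Context: For subgroups $H,K\le G$ and $g\in G$ write $H^g=g^{-1}Hg$ and $N_G(H,K)=\{g\in G: H^g\le K\}$. For a finite group $X$, $O^p(X)$ is the smallest normal subgroup of $X$ whose quotient is a $p$-group. The following categories all have as objects the nonidentity $p$-subgroups of $G$, with composition induced by multiplication in $G$: the poset $\mathcal S^*_G$ (exactly one morphism $H\to K$ if $H\le K$, none otherwise); $\mathcal T^*_G(H,K)=N_G(H,K)$; $\mathcal L^*_G(H,K)=O^p(C_G(H))\backslash N_G(H,K)$; $\mathcal F^*_G(H,K)=C_G(H)\backslash N_G(H,K)$; $\mathcal O^*_G(H,K)=N_G(H,K)/K$; $\widetilde{\mathcal F}^*_G(H,K)=C_G(H)\backslash N_G(H,K)/K$ (double cosets). For a category $\mathcal C$, $\mathcal C(H)=\mathcal C(H,H)$; so e.g. $\mathcal T^*_G(H)=N_G(H)$, $\mathcal L^*_G(H)=O^p(C_G(H))\backslash N_G(H)$, $\mathcal F^*_G(H)=C_G(H)\backslash N_G(H)$, $\mathcal O^*_G(H)=N_G(H)/H$. Leinster Euler characteristic: for a finite category $\mathcal C$ let $\zeta(a,b)=|\mathcal C(a,b)|$. A weighting is a function $k^\bullet:\mathrm{Ob}(\mathcal C)\to\mathbb Q$ with $\sum_b\zeta(a,b)k^b=1$ for every object $a$; a coweighting is $k_\bullet:\mathrm{Ob}(\mathcal C)\to\mathbb Q$ with $\sum_a k_a\zeta(a,b)=1$ for every object $b$. If $\mathcal C$ admits both, it has Euler characteristic $\chi(\mathcal C)=\sum_b k^b=\sum_a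 k_a$ (independent of the choices). $\mu(H,K)$ denotes the Möbius function of the poset of all subgroups of $G$ ($\mu(H,H)=1$, $\mu(H,K)=-\sum_{H\le L<K}\mu(H,L)$ if $H<K$, $\mu(H,K)=0$ if $H\not\le K$), and $\mu(K)=\mu(1,K)$. *)

From HB Require Import structures.
From mathcomp Require Import all_boot all_order all_algebra all_fingroup all_solvable.
Set Implicit Arguments. Unset Strict Implicit. Unset Printing Implicit Defensive.
Import GRing.Theory Num.Theory.
Local Open Scope group_scope.

Section Defs.
Variable gT : finGroupType.
Implicit Types (G H K X : {group gT}).

Definition pobj (p : nat) G H : bool :=
  [&& H \subset G, p.-group H & H != 1%G].

(* N_G(H,K) = {g in G | H^g <= K}, with H^g = g^-1 H g = H :^ g. *)
Definition transp G H K : {set gT} := [set g in G | H :^ g \subset K].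

(* O^p(X): smallest normal subgroup of X with p-group quotient, i.e. the
   intersection of all normal subgroups N of X with X/N a p-group. *)
Definition Oup (p : nat) (X : {set gT}) : {set gT} :=
  \bigcap_(N : {group gT} | (N <| X) && p.-group (X / N)) N.

(* Hom-set cardinalities zeta(H,K) of the six categories. *)
Definition zetaS (H K : {group gT}) : nat := (H \subset K).
Definition zetaT G H K : nat := #|transp G H K|.
(* O^p(C_G(H)) \ N_G(H,K): right cosets O^p(C_G(H)) g *)
Definition zetaL p G H K : nat :=
  #|[set Oup p 'C_G(H) :* g | g in transp G H K]|.
Definition zetaF G H K : nat := #|[set 'C_G(H) :* g | g in transp G H K]|.
(* N_G(H,K) / K: left cosets g K *)
Definition zetaO G H K : nat := #|[set g *: (K : {set gT}) | g in transp G H K]|.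
(* C_G(H) \ N_G(H,K) / K: double cosets C_G(H) g K *)
Definition zetaFt G H K : nat :=
  #|[set ('C_G(H) :* g) * K | g in transp G H K]|.

(* Leinster weightings / coweightings on a finite category whose objects are
   the groups satisfying [obj] and whose hom-set sizes are [zeta]. *)
Definition is_weighting (obj : pred {group gT}) (zeta : {group gT} -> {group gT} -> nat)
    (k : {group gT} -> rat) : Prop :=
  forall a, obj a -> (\sum_(b | obj b) (zeta a b)%:R * k b = 1)%R.

Definition is_coweighting (obj : pred {group gT}) (zeta : {group gT} -> {group gT} -> nat)
    (k : {group gT} -> rat) : Prop :=
  forall b, obj b -> (\sum_(a | obj a) k a * (zeta a b)%:R = 1)%R.

Definition euler_char (obj : pred {group gT}) (zeta : {group gT} -> {group gT} -> nat)
    (chi : rat) : Prop :=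
  [/\ exists k, is_weighting obj zeta k,
      exists k, is_coweighting obj zeta k,
      forall k, is_weighting obj zeta k -> (\sum_(b | obj b) k b)%R = chi
    & forall k, is_coweighting obj zeta k -> (\sum_(a | obj a) k a)%R = chi].

Fixpoint mobius_rec (n : nat) (H K : {group gT}) : int :=
  match n with
  | 0 => 0%R
  | n'.+1 =>
      if H == K then 1%R
      else if H \subset K then
        (- \sum_(L : {group gT} | (H \subset L) && (L \proper K)) mobius_rec n' H L)%R
      else 0%R
  end.
Definition mobius H K : int := mobius_rec #|K| H K.
Definition mu K : int := mobius 1%G K.

Definition conj_classes G (P : pred {group gT}) : {set {set {group gT}}} :=
  [set orbit 'JG G H | H : {group gT} in P].
Definition crep (X : {set {group gT}}) : {group gT} := odflt 1%G [pick K in X].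

End Defs.

(* For T, F and L the hom-sets have |N_G(H,K)| / u(H) elements, where
   u(H) = 1, |C_G(H)|, |O^p(C_G(H))| is invariant under G-conjugation.  Reindexing the
   morphisms H -> K by g in G turns sums over H (resp. K) into sums over the subgroups
   of K^(g^-1) (resp. the supergroups of H^g).  As the nonidentity subgroups of a
   nonidentity p-group have Moebius sum -1, k_H = -mu(H) u(H) / |G| is a coweighting; a
   weighting exists because the averaged weighting equations are triangular for
   inclusion with unit diagonal.  Orbit-stabiliser folds sum_H k_H into the sum over
   conjugacy classes.  The same averaging handles S, O (where |N_G(H,K)| is divided by
   |K|) and F~ (a double coset C_G(H) g K has |C_G(H)| |K| / |C_G(H) :&: K^(g^-1)|
   elements).  For F~ the identity sum_(1 < H <= K) -mu(H) |C_K(H)| = |K| replaces the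
   Moebius sum, and for O the identity sum_(1 < H <= K) #gen(H) = |K| - 1, with
   #gen(C) = (p - 1)/p |C| for cyclic C, produces the cyclic correction term. *)

From mathcomp Require Import all_boot all_order all_algebra all_fingroup all_solvable.
From mathcomp Require Import ring.
Import GRing.Theory Num.Theory.
Set Implicit Arguments. Unset Strict Implicit. Unset Printing Implicit Defensive.

Local Open Scope group_scope.

Lemma cardG_natr_neq0 (gT : finGroupType) (H : {group gT}) : (#|H|%:R != 0 :> rat)%R.
Proof. by rewrite pnatr_eq0 -lt0n cardG_gt0. Qed.

Section Mobius.
Variable gT : finGroupType.
Implicit Types (H K L : {group gT}).

Lemma mobius_rec_fuel n m H K : (#|K| <= n)%N -> (#|K| <= m)%N ->
  mobius_rec n H K = mobius_rec m H K.
Proof.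
elim: n m H K => [|n IH] [|m] H K le_Kn le_Km //=.
- by have := leq_trans (cardG_gt0 K) le_Kn.
- by have := leq_trans (cardG_gt0 K) le_Km.
case: eqP => // _; case: ifP => // _; congr (- _)%R.
apply: eq_bigr => L /andP[_ /proper_card ltLK].
by apply: IH; rewrite -ltnS; apply: leq_trans ltLK _.
Qed.

Lemma mu1 : mu [1 gT]%G = 1%R.
Proof. by rewrite /mu /mobius cards1 /= eqxx. Qed.

Lemma mu_rec K : K != 1%G -> mu K = (- \sum_(L : {group gT} | L \proper K) mu L)%R.
Proof.
move=> ntK; rewrite /mu /mobius -(prednK (cardG_gt0 K)) /= eq_sym (negbTE ntK) sub1G.
congr (- _)%R; apply: eq_big => [L | L /andP[_ /proper_card ltLK]]; first by rewrite sub1G.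
by apply: mobius_rec_fuel; rewrite // -ltnS prednK.
Qed.

Lemma sum_mu_sub K : K != 1%G -> (\sum_(L : {group gT} | L \subset K) mu L = 0)%R.
Proof.
move=> ntK; rewrite (bigD1 K) //= mu_rec //.
by rewrite (eq_bigl (fun L : {group gT} => L \proper K)) ?addNr // => L; rewrite properEneq andbC.
Qed.

Lemma sum_mu_sub_ntrivg K : K != 1%G ->
  (\sum_(L : {group gT} | (L \subset K) && (L != 1%G)) mu L = -1)%R.
Proof.
move=> ntK; move/eqP: (sum_mu_sub ntK); rewrite (bigD1 1%G) ?sub1G //= mu1.
by rewrite addrC addr_eq0 => /eqP.
Qed.

Lemma conjG_inj x : injective (fun L : {group gT} => (L :^ x)%G).
Proof. by move=> L1 L2 /(congr1 val) /conjsg_inj /val_inj. Qed.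

Lemma mobius_rec_conj n H K x :
  mobius_rec n (H :^ x)%G (K :^ x)%G = mobius_rec n H K.
Proof.
elim: n H K => [|n IH] H K //=.
rewrite (inj_eq (@conjG_inj x)) conjSg; case: eqP => // _; case: ifP => // _.
congr (- _)%R; rewrite (reindex_inj (@conjG_inj x)) /=.
by apply: eq_big => [L|L _]; rewrite ?conjSg ?properJ.
Qed.

Lemma mu_conj K x : mu (K :^ x)%G = mu K.
Proof.
rewrite /mu; have {1}-> : [1 gT]%G = (1 :^ x)%G by apply: val_inj; rewrite /= conjs1g.
by rewrite /mobius cardJg mobius_rec_conj.
Qed.

End Mobius.

Section Leinster.
Variables (gT : finGroupType) (obj : pred {group gT}).
Variable zeta : {group gT} -> {group gT} -> nat.
Implicit Types (a b : {group gT}) (k w : {group gT} -> rat).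

Lemma sum_coweighting_weighting w k :
  is_weighting obj zeta w -> is_coweighting obj zeta k ->
  (\sum_(a | obj a) k a = \sum_(b | obj b) w b)%R.
Proof.
move=> wW kW.
transitivity (\sum_(a | obj a) \sum_(b | obj b) k a * ((zeta a b)%:R * w b))%R.
  by apply: eq_bigr => a oa; rewrite -big_distrr /= wW ?mulr1.
rewrite exchange_big /=; apply: eq_bigr => b ob.
transitivity ((\sum_(a | obj a) k a * (zeta a b)%:R) * w b)%R.
  by rewrite big_distrl; apply: eq_bigr => a _; rewrite mulrA.
by rewrite kW ?mul1r.
Qed.

Lemma euler_char_coweighting w k chi :
  is_weighting obj zeta w -> is_coweighting obj zeta k ->
  (\sum_(a | obj a) k a)%R = chi -> euler_char obj zeta chi.
Proof.
move=> wW kW <-; split; [by exists w | by exists k | |].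
  by move=> w' w'W; rewrite (sum_coweighting_weighting w'W kW).
by move=> k' k'W; rewrite (sum_coweighting_weighting wW k'W) (sum_coweighting_weighting wW kW).
Qed.

End Leinster.

Section Triangular.
Variables (gT : finGroupType) (R : fieldType) (obj : pred {group gT}).
Implicit Types (a b : {group gT}).

(* Inclusion-triangular systems with invertible diagonal are solved top-down,
   defining [k b] once [k] is known on all strictly larger groups. *)
Lemma triangular_solvable (c : {group gT} -> {group gT} -> R) (f : {group gT} -> R) :
  (forall a, obj a -> c a a != 0%R) ->
  exists k : {group gT} -> R, forall a, obj a ->
    (\sum_(b | obj b && (a \subset b)) c a b * k b = f a)%R.
Proof.
move=> c_neq0; pose M := #|gT|.+1.
suff /(_ M (leqnn M)) [k kP] : forall m, (m <= M)%N -> exists k : {group gT} -> R,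
    forall a, obj a -> (M - m <= #|a|)%N ->
    (\sum_(b | obj b && (a \subset b)) c a b * k b = f a)%R.
  by exists k => a oa; apply: kP; rewrite ?subnn.
elim=> [|m IHm] leMm.
  exists (fun=> 0%R) => a oa; rewrite subn0 => /leq_trans/(_ (max_card (mem a))).
  by rewrite ltnn.
have [k kP] := IHm (ltnW leMm); pose n := (M - m.+1)%N.
have Mm : (M - m = n.+1)%N by rewrite /n subnSK.
pose rest b := (\sum_(b' | (obj b' && (b \subset b')) && (b' != b)) c b b' * k b')%R.
exists (fun b => if #|b| == n then ((f b - rest b) / c b b)%R else k b) => a oa le_n_a.
have bigger_b b : a \subset b -> b != a -> #|b| != n.
  move=> sab nba; rewrite neq_ltn (leq_ltn_trans le_n_a) ?orbT //.
  by apply: proper_card; rewrite properEneq eq_sym nba.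
have [an | an] := eqVneq #|a| n.
  rewrite (bigD1 a) ?oa //= an eqxx mulrC -mulrA mulVf ?c_neq0 // mulr1.
  rewrite [X in (_ + X)%R](eq_bigr (fun b => c a b * k b)%R) ?subrK //.
  by move=> b /andP[/andP[_ sab] nba]; rewrite (negbTE (bigger_b b sab nba)).
rewrite -(kP a oa); last by rewrite Mm ltn_neqAle eq_sym an.
apply: eq_bigr => b /andP[_ sab]; have [->|nba] := eqVneq b a; first by rewrite (negbTE an).
by rewrite (negbTE (bigger_b b sab nba)).
Qed.

End Triangular.

Section ConjClasses.
Variables (gT : finGroupType) (G : {group gT}) (P : pred {group gT}).
Hypothesis PJ : forall H x, x \in G -> P (H :^ x)%G = P H.

Lemma crep_orbit H : crep (orbit 'JG G H) \in orbit 'JG G H.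
Proof. by rewrite /crep; case: pickP => [//|/(_ H)]; rewrite orbit_refl. Qed.

Lemma crep_conj_classes X : X \in conj_classes G P -> P (crep X).
Proof. by case/imsetP=> H PH ->; case/orbitP: (crep_orbit H) => x Gx <-; rewrite PJ. Qed.

(* Orbit-stabiliser: the class of [H] has [|G : N_G(H)|] members. *)
Lemma sum_conj_classes (F : {group gT} -> rat) :
  (forall H x, P H -> x \in G -> F (H :^ x)%G = F H) ->
  (\sum_(X in conj_classes G P) F (crep X) / #|'N_G(crep X)|%:R
     = \sum_(H | P H) F H / #|G|%:R)%R.
Proof.
move=> FJ; rewrite (eq_bigl (mem P)) // (partition_big_imset (fun H => orbit 'JG G H)) /=.
apply: eq_bigr => _ /imsetP[H0 PH0 ->]; set Y := orbit 'JG G H0.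
have YP H : H \in Y -> P H /\ F H = F (crep Y).
  case/orbitP=> g Gg <-; case/orbitP: (crep_orbit H0) => g' Gg' <- /=.
  by rewrite PJ // FJ // FJ.
rewrite (eq_bigl (mem Y)) => [|H]; last first.
  apply/andP/idP => [[_ /eqP <-] | YH]; first exact: orbit_refl.
  by split; [exact: (YP H YH).1 | apply/eqP/orbit_eqP].
rewrite (eq_bigr (fun=> F (crep Y) / #|G|%:R)%R) => [|H /YP[_ ->] //].
have cardY : #|Y| = #|G : 'N_G(crep Y)|.
  have /orbit_eqP orbitY := crep_orbit H0.
  by rewrite -/Y in orbitY; rewrite -{1}orbitY card_orbit astab1JG.
rewrite sumr_const cardY -(Lagrange (subsetIl G 'N(crep Y))) natrM.
by field; rewrite cardG_natr_neq0 pnatr_eq0 -lt0n indexg_gt0.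
Qed.

End ConjClasses.

Lemma card_imset_blocks (T : finType) (A : {set T}) (blk : T -> {set T}) :
  (forall x, x \in A -> x \in blk x) ->
  (forall x y, x \in A -> y \in blk x -> y \in A /\ blk y = blk x) ->
  (#|blk @: A|%:R = \sum_(x in A) 1 / #|blk x|%:R :> rat)%R.
Proof.
move=> blk_refl blk_eq.
rewrite (partition_big_imset blk) /= -sum1_card natr_sum.
apply: eq_bigr => _ /imsetP[x0 Ax0 ->].
rewrite (eq_bigl (mem (blk x0))) => [|x]; last first.
  by apply/andP/idP => [[Ax /eqP <-] | /(blk_eq _ _ Ax0)[-> ->]]; [exact: blk_refl|].
rewrite (eq_bigr (fun=> 1 / #|blk x0|%:R)%R) => [|x /(blk_eq _ _ Ax0)[_ ->] //].
rewrite sumr_const div1r -[RHS]mulr_natr mulVf // pnatr_eq0 -lt0n.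
by apply/card_gt0P; exists x0; exact: blk_refl.
Qed.

Section Transporter.
Variables (gT : finGroupType) (G : {group gT}).
Implicit Types (a b U : {group gT}).

Lemma transp_self a : transp G a a = 'N_G(a).
Proof. by apply/setP => g; rewrite !inE. Qed.

Lemma card_rcosets_transp a b U : U \subset 'N_G(a) ->
  (#|[set U :* g | g in transp G a b]|%:R = #|transp G a b|%:R / #|U|%:R :> rat)%R.
Proof.
rewrite subsetI => /andP[sUG nUa].
rewrite (card_imset_blocks (blk := fun g => U :* g)) => [||g h].
- rewrite (eq_bigr (fun=> 1 / #|U|%:R)%R) => [|g _]; last by rewrite card_rcoset.
  by rewrite sumr_const -[LHS]mulr_natl mul1r.
- by move=> g _; exact: rcoset_refl.
rewrite !inE => /andP[Gg sagb] /rcosetP[u Uu ->].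
rewrite rcosetM rcoset_id // groupM ?(subsetP sUG u Uu) //=.
by rewrite conjsgM (normP (subsetP nUa u Uu)).
Qed.
Lemma card_lcosets_transp a b : b \subset G ->
  (#|[set (g *: (b : {set gT}))%g | g in transp G a b]|%:R
     = #|transp G a b|%:R / #|b|%:R :> rat)%R.
Proof.
move=> sbG; rewrite (card_imset_blocks (blk := fun g => (g *: (b : {set gT}))%g)) => [||g h].
- rewrite (eq_bigr (fun=> 1 / #|b|%:R)%R) => [|g _]; last by rewrite card_lcoset.
  by rewrite sumr_const -[LHS]mulr_natl mul1r.
- by move=> g _; exact: lcoset_refl.
rewrite !inE => /andP[Gg sagb] /lcosetP[y yb ->].
rewrite lcosetM lcoset_id // groupM ?(subsetP sbG y yb) //=.
by rewrite conjsgM -(conjGid yb) conjSg.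
Qed.

Lemma card_dcoset (C b : {group gT}) g : #|(C :* g) * b| = #|C * (b :^ g^-1)|.
Proof.
rewrite -[RHS](card_rcoset _ g) conjsgE invgK !mulgA.
by rewrite -(mulgA _ [set g^-1] [set g]) mulg_set1 mulVg rcoset1.
Qed.

Lemma card_dcosets_transp a b (C : {group gT}) : C \subset 'N_G(a) -> b \subset G ->
  (#|[set ((C :* g) * b)%g | g in transp G a b]|%:R
     = \sum_(g in transp G a b) #|(C :&: b :^ g^-1)%g|%:R / (#|C|%:R * #|b|%:R) :> rat)%R.
Proof.
rewrite subsetI => /andP[sCG nCa] sbG.
rewrite (card_imset_blocks (blk := fun g => ((C :* g) * b)%g)) => [||g h].
- apply: eq_bigr => g _; rewrite card_dcoset.
  have := mul_cardG C (b :^ g^-1)%G; rewrite /= cardJg => /(congr1 (fun n => n%:R : rat)).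
  rewrite !natrM => cardCb.
  have := mulf_neq0 (cardG_natr_neq0 C) (cardG_natr_neq0 b).
  by rewrite cardCb mulf_eq0 negb_or => /andP[CBn0 CIBn0]; field; rewrite CBn0 CIBn0.
- by move=> g _; apply/mulsgP; exists g 1; rewrite ?rcoset_refl ?mulg1.
rewrite !inE => /andP[Gg sagb] /mulsgP[_ y /rcosetP[c Cc ->] yb ->].
rewrite !rcosetM rcoset_id // -(mulgA _ [set y] b) (lcoset_id yb); split=> //.
rewrite !groupM ?(subsetP sCG c Cc) ?(subsetP sbG y yb) //=.
by rewrite !conjsgM (normP (subsetP nCa c Cc)) -(conjGid yb) conjSg.
Qed.

End Transporter.

Lemma exchange_big_cond (R : nmodType) (I J : finType) (P : pred I) (Q : pred J)
    (r : I -> J -> bool) (F : I -> J -> R) :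
  (\sum_(i | P i) \sum_(j | Q j && r i j) F i j
     = \sum_(j | Q j) \sum_(i | P i && r i j) F i j)%R.
Proof.
rewrite (exchange_big_dep Q) /= => [|i j _ /andP[]//].
by apply: eq_bigr => j Qj; apply: eq_bigl => i; rewrite Qj.
Qed.

Section Objects.
Variables (gT : finGroupType) (G : {group gT}) (p : nat).
Implicit Types (a b : {group gT}).
Local Notation obj := (pobj p G).

Lemma pobjJ a x : x \in G -> obj (a :^ x)%G = obj a.
Proof.
move=> Gx; have ntJ : ((a :^ x)%G == 1%G) = (a == 1%G).
  by rewrite -[RHS](inj_eq (@conjG_inj _ x)); congr (_ == _); apply: val_inj; rewrite /= conjs1g.
by rewrite /pobj ntJ pgroupJ sub_conjg conjGid ?groupV.
Qed.

Lemma pobj_sub a b : obj b -> a \subset b -> obj a = (a != 1%G).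
Proof. by case/and3P=> sbG pb _ sab; rewrite /pobj (subset_trans sab sbG) (pgroupS sab pb). Qed.

Lemma sum_mu_pobj b : obj b ->
  (\sum_(a | obj a && (a \subset b)) (mu a)%:~R = -1 :> rat)%R.
Proof.
move=> ob; have ntb : b != 1%G by case/and3P: ob.
rewrite (eq_bigl (fun a => (a \subset b) && (a != 1%G))) => [|a].
  by rewrite -(big_morph _ (@intrD _) (@mulr0z _ 1)) sum_mu_sub_ntrivg.
by case sab: (a \subset b); rewrite ?andbF // andbT (pobj_sub ob).
Qed.

(* g in G is a morphism a -> b exactly for the b containing a^g. *)
Lemma sum_transp_sup (F : {group gT} -> {group gT} -> rat) (f : {group gT} -> rat) a :
  obj a ->
  (forall a', obj a' -> \sum_(b | obj b && (a' \subset b)) F a' b = f a')%R ->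
  (forall a' x, obj a' -> x \in G -> f (a' :^ x)%G = f a') ->
  (\sum_(b | obj b) \sum_(g in transp G a b) F (a :^ g)%G b = #|G|%:R * f a)%R.
Proof.
move=> oa sumF fJ.
transitivity (\sum_(g in G) \sum_(b | obj b && (a :^ g \subset b)) F (a :^ g)%G b)%R.
  by rewrite exchange_big_cond; apply: eq_bigr => b _; apply: eq_bigl => g; rewrite inE.
by rewrite mulr_natl -sumr_const; apply: eq_bigr => g Gg; rewrite sumF ?pobjJ ?fJ.
Qed.

Lemma sum_transp_sub (F : {group gT} -> {group gT} -> rat) (f : {group gT} -> rat) b :
  obj b ->
  (forall b', obj b' -> \sum_(a | obj a && (a \subset b')) F a b' = f b')%R ->
  (forall b' x, obj b' -> x \in G -> f (b' :^ x)%G = f b') ->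
  (\sum_(a | obj a) \sum_(g in transp G a b) F a (b :^ g^-1)%G = #|G|%:R * f b)%R.
Proof.
move=> ob sumF fJ.
transitivity (\sum_(g in G) \sum_(a | obj a && (a :^ g \subset b)) F a (b :^ g^-1)%G)%R.
  by rewrite -exchange_big_cond; apply: eq_bigr => a _; apply: eq_bigl => g; rewrite inE.
rewrite mulr_natl -sumr_const; apply: eq_bigr => g Gg.
rewrite -(fJ b g^-1) ?groupV // -sumF ?pobjJ ?groupV //.
by apply: eq_bigl => a; rewrite sub_conjg.
Qed.

Section TransporterQuotient.
Variables (u : {group gT} -> rat) (zeta : {group gT} -> {group gT} -> nat).
Hypothesis u_neq0 : forall a, obj a -> u a != 0%R.
Hypothesis uJ : forall a x, obj a -> x \in G -> u (a :^ x)%G = u a.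

Lemma euler_char_transp_div :
  (forall a b, obj a -> obj b -> (zeta a b)%:R = #|transp G a b|%:R / u a :> rat)%R ->
  euler_char obj zeta (\sum_(a | obj a) - (mu a)%:~R * u a / #|G|%:R)%R.
Proof.
move=> zetaE; pose k a : rat := (- (mu a)%:~R * u a / #|G|%:R)%R.
have [|w wP] := triangular_solvable (obj := obj) (c := fun _ _ => 1%R)
  (fun a => u a / #|G|%:R)%R.
  by move=> a _; exact: oner_neq0.
apply: (@euler_char_coweighting _ _ _ w k) => // [a oa|b ob].
  rewrite (eq_bigr (fun b => (u a)^-1 * \sum_(g in transp G a b) w b)%R) => [|b ob].
    rewrite -big_distrr /= (sum_transp_sup (F := fun _ b => w b) (f := fun a => (u a / #|G|%:R)%R)).
    - by field; rewrite cardG_natr_neq0 u_neq0.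
    - by [].
    - by move=> a' oa'; rewrite -(wP a' oa'); apply: eq_bigr => b _; rewrite mul1r.
    - by move=> a' x oa' Gx; rewrite uJ.
  by rewrite zetaE // sumr_const -[in RHS]mulr_natr; ring.
rewrite (eq_bigr (fun a => \sum_(g in transp G a b) - (mu a)%:~R / #|G|%:R)%R) => [|a oa].
  rewrite (sum_transp_sub (F := fun a _ => (- (mu a)%:~R / #|G|%:R)%R)
                          (f := fun=> (#|G|%:R^-1)%R)).
  - by rewrite mulfV ?cardG_natr_neq0.
  - by [].
  - by move=> b' ob'; rewrite -big_distrl /= sumrN sum_mu_pobj // opprK mul1r.
  - by [].
by rewrite /k zetaE // sumr_const -mulr_natr; field; rewrite cardG_natr_neq0 u_neq0.
Qed.

Lemma conj_class_sum_mu :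
  (forall a, obj a -> (zeta a a)%:R = #|'N_G(a)|%:R / u a :> rat)%R ->
  (\sum_(X in conj_classes G obj) - (mu (crep X))%:~R / (zeta (crep X) (crep X))%:R
     = \sum_(a | obj a) - (mu a)%:~R * u a / #|G|%:R :> rat)%R.
Proof.
move=> zetaE; rewrite -(sum_conj_classes (P := obj)) => [|H x Gx|H x oH Gx]; last 2 first.
- exact: pobjJ.
- by rewrite mu_conj uJ.
apply: eq_bigr => X /(crep_conj_classes (fun H x Gx => pobjJ H Gx)) oX.
by rewrite zetaE //; field; rewrite cardG_natr_neq0 u_neq0.
Qed.

Lemma euler_char_transp_div_classes :
  (forall a b, obj a -> obj b -> (zeta a b)%:R = #|transp G a b|%:R / u a :> rat)%R ->
  euler_char obj zeta (\sum_(X in conj_classes G obj)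
                         - (mu (crep X))%:~R / (zeta (crep X) (crep X))%:R)%R.
Proof.
move=> zetaE; rewrite conj_class_sum_mu => [|a oa]; last by rewrite zetaE // transp_self.
exact: euler_char_transp_div.
Qed.

End TransporterQuotient.

End Objects.

Section Oup.
Variables (gT : finGroupType) (p : nat).
Implicit Types (A : {set gT}) (X : {group gT}).

Lemma Oup_group_set A : group_set (Oup p A).
Proof. exact: group_set_bigcap. Qed.
Canonical Oup_group A := group (Oup_group_set A).

Lemma Oup_sub X : Oup p X \subset X.
Proof. by apply: bigcap_inf; rewrite normal_refl trivg_quotient pgroup1. Qed.

Lemma OupJ X x : Oup p (X :^ x) = Oup p X :^ x.
Proof.
rewrite /Oup -bigcapJ (reindex_inj (@conjG_inj _ x)) /=.
apply: eq_bigl => N; rewrite normalJ; apply: andb_id2l => nNX.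
by rewrite /pgroup !card_quotient ?normal_norm ?normalJ // indexJg.
Qed.

End Oup.

Section Categories.
Variables (gT : finGroupType) (G : {group gT}) (p : nat).
Implicit Types (a b : {group gT}).
Local Notation obj := (pobj p G).

Definition chiT : rat := \sum_(X in conj_classes G obj)
  - (mu (crep X))%:~R / (zetaT G (crep X) (crep X))%:R.
Definition chiF : rat := \sum_(X in conj_classes G obj)
  - (mu (crep X))%:~R / (zetaF G (crep X) (crep X))%:R.
Definition chiL : rat := \sum_(X in conj_classes G obj)
  - (mu (crep X))%:~R / (zetaL p G (crep X) (crep X))%:R.

Lemma centJ_in a x : x \in G -> 'C_G(a :^ x) = 'C_G(a) :^ x.
Proof. by move=> Gx; rewrite conjIg -centJ (conjGid Gx). Qed.

Lemma cent_sub_normal a : 'C_G(a) \subset 'N_G(a).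
Proof. by rewrite setIS ?cent_sub. Qed.

Lemma euler_char_T : euler_char obj (zetaT G) chiT.
Proof. by apply: (euler_char_transp_div_classes (u := fun=> 1%R)) => // *; rewrite divr1. Qed.

Lemma euler_char_rcosets (U : {group gT} -> {group gT}) :
  (forall a, U a \subset 'N_G(a)) ->
  (forall a x, x \in G -> #|U (a :^ x)%G| = #|U a|) ->
  euler_char obj (fun a b => #|[set U a :* g | g in transp G a b]|)
    (\sum_(X in conj_classes G obj)
       - (mu (crep X))%:~R / #|[set U (crep X) :* g | g in transp G (crep X) (crep X)]|%:R)%R.
Proof.
move=> sUN cardUJ; apply: (euler_char_transp_div_classes (u := fun a => #|U a|%:R%R)).
- by move=> a _; exact: cardG_natr_neq0.
- by move=> a x _ Gx; rewrite cardUJ.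
- by move=> a b _ _; exact: card_rcosets_transp.
Qed.

Lemma euler_char_F : euler_char obj (zetaF G) chiF.
Proof.
apply: (euler_char_rcosets (U := fun a => 'C_G(a)%G)) => [|a x Gx]; first exact: cent_sub_normal.
by rewrite /= centJ_in // cardJg.
Qed.

Lemma euler_char_L : euler_char obj (zetaL p G) chiL.
Proof.
apply: (euler_char_rcosets (U := fun a => Oup_group p 'C_G(a))) => [a|a x Gx].
  exact: subset_trans (Oup_sub _ _) (cent_sub_normal a).
by rewrite /= centJ_in // (OupJ p 'C_G(a)%G) cardJg.
Qed.

Lemma chiT_sum : chiT = (\sum_(a | obj a) - (mu a)%:~R / #|G|%:R)%R.
Proof.
rewrite /chiT (conj_class_sum_mu (u := fun=> 1%R)) => [|a|a|a oa]//.
  by apply: eq_bigr => a _; rewrite mulr1.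
by rewrite /zetaT transp_self divr1.
Qed.

Lemma chiF_sum : chiF = (\sum_(a | obj a) - (mu a)%:~R * #|'C_G(a)|%:R / #|G|%:R)%R.
Proof.
rewrite /chiF (conj_class_sum_mu (u := fun a => #|'C_G(a)|%:R%R)) => // [a _|a x _ Gx|a oa].
- exact: cardG_natr_neq0.
- by rewrite centJ_in // cardJg.
- by rewrite /zetaF card_rcosets_transp ?cent_sub_normal ?transp_self.
Qed.

Lemma euler_char_S : euler_char obj (@zetaS gT) (#|G|%:R * chiT)%R.
Proof.
have [|k kP] := triangular_solvable (R := rat) (obj := obj) (c := fun _ _ => 1%R) (fun=> 1%R).
  by move=> a _; exact: oner_neq0.
apply: (@euler_char_coweighting _ _ _ k (fun a => - (mu a)%:~R)%R) => [a oa|b ob|].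
- rewrite -[RHS](kP a oa) [RHS]big_mkcondr; apply: eq_bigr => b _.
  by rewrite /zetaS; case: (a \subset b); rewrite ?mul1r ?mul0r.
- rewrite -[RHS]opprK -(sum_mu_pobj ob) -sumrN [in RHS]big_mkcondr; apply: eq_bigr => a _.
  by rewrite /zetaS; case: (a \subset b); rewrite ?mulr1 ?mulr0.
by rewrite chiT_sum mulr_sumr; apply: eq_bigr => a _; field; rewrite cardG_natr_neq0.
Qed.

Lemma pobj_cent1 b x : obj b -> x \in b -> obj 'C_b[x]%G.
Proof.
move=> ob bx; rewrite (pobj_sub ob) ?subsetIl //; case/and3P: ob => _ _ ntb.
apply: contraNneq ntb => /(congr1 val) /= Cbx1.
have : x \in 'C_b[x] by rewrite inE bx cent1id.
rewrite Cbx1 => /set1P x1.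
by apply/eqP/val_inj; rewrite /= -Cbx1 x1 cent11T setIT.
Qed.

(* Count the pairs (H, x) with x in K centralising H by x: the H are then the
   nonidentity subgroups of C_K(x), whose Moebius sum is -1. *)
Lemma sum_mu_card_cent b : obj b ->
  (\sum_(a | obj a && (a \subset b)) - (mu a)%:~R * #|'C_G(a) :&: b|%:R = #|b|%:R :> rat)%R.
Proof.
move=> ob; have sbG : b \subset G by case/and3P: ob.
transitivity (\sum_(a | obj a && (a \subset b))
                \sum_(x | (x \in b) && (a \subset 'C[x])) - (mu a)%:~R : rat)%R.
  apply: eq_bigr => a _; rewrite (eq_bigl (mem ('C_G(a) :&: b))) => [|x].
    by rewrite sumr_const mulr_natr.
  rewrite !inE sub_cent1 andbC; case bx: (x \in b); rewrite ?andbF //.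
  by rewrite (subsetP sbG x bx).
rewrite exchange_big_cond -sumr_const; apply: eq_bigr => x bx.
rewrite (eq_bigl (fun a => obj a && (a \subset 'C_b[x]))) => [|a]; last by rewrite subsetI andbA.
by rewrite sumrN sum_mu_pobj ?opprK ?pobj_cent1.
Qed.

Lemma zetaFt_sum a b : obj b ->
  ((zetaFt G a b)%:R = \sum_(g in transp G a b)
     #|'C_G(a) :&: b :^ g^-1|%:R / (#|'C_G(a)|%:R * #|b|%:R) :> rat)%R.
Proof. by case/and3P=> sbG _ _; rewrite /zetaFt card_dcosets_transp ?cent_sub_normal. Qed.

Lemma card_centJ_in a b g : g \in G -> #|'C_G(a) :&: b :^ g^-1| = #|'C_G(a :^ g) :&: b|.
Proof. by move=> Gg; rewrite -(cardJg _ g) conjIg conjsgKV -centJ_in. Qed.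

Lemma weighting_Ft : exists w, is_weighting obj (zetaFt G) w.
Proof.
have [|j jP] := triangular_solvable (R := rat) (obj := obj)
  (c := fun a b => #|'C_G(a) :&: b|%:R%R) (fun a => #|'C_G(a)|%:R / #|G|%:R)%R.
  by move=> a _; exact: (cardG_natr_neq0 ('C_G(a) :&: a)%G).
exists (fun b => j b * #|b|%:R)%R => a oa.
pose F a' b := (#|'C_G(a') :&: b|%:R * j b / #|'C_G(a')|%:R)%R.
rewrite (eq_bigr (fun b => \sum_(g in transp G a b) F (a :^ g)%G b)%R) => [|b ob].
  rewrite (sum_transp_sup (f := fun=> (#|G|%:R^-1)%R)) ?mulfV ?cardG_natr_neq0 //.
  by move=> a' oa'; rewrite /F -mulr_suml jP //; field; rewrite !cardG_natr_neq0.
rewrite zetaFt_sum // mulr_suml; apply: eq_bigr => g; rewrite inE => /andP[Gg _].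
by rewrite /F /= card_centJ_in // centJ_in // cardJg; field; rewrite !cardG_natr_neq0.
Qed.

Lemma coweighting_Ft :
  is_coweighting obj (zetaFt G) (fun a => - (mu a)%:~R * #|'C_G(a)|%:R / #|G|%:R)%R.
Proof.
move=> b ob; pose F a b' : rat := (- (mu a)%:~R * #|'C_G(a) :&: b'|%:R / (#|G|%:R * #|b'|%:R))%R.
rewrite (eq_bigr (fun a => \sum_(g in transp G a b) F a (b :^ g^-1)%G)%R) => [|a oa].
  rewrite (sum_transp_sub (f := fun=> (#|G|%:R^-1)%R)) ?mulfV ?cardG_natr_neq0 //.
  by move=> b' ob'; rewrite /F -mulr_suml sum_mu_card_cent //; field; rewrite !cardG_natr_neq0.
rewrite zetaFt_sum // mulr_sumr; apply: eq_bigr => g _.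
by rewrite /F /= cardJg; field; rewrite !cardG_natr_neq0.
Qed.

Lemma euler_char_Ft : euler_char obj (zetaFt G) chiF.
Proof.
have [w wW] := weighting_Ft.
exact: euler_char_coweighting wW coweighting_Ft (esym chiF_sum).
Qed.

Lemma sum_card_generators (P : pred {group gT}) :
  \sum_(a | P a) #|[set x | generator a x]| = #|[set x | P <[x]>%G]|.
Proof.
rewrite -sum1_card (partition_big (fun x => <[x]>%G) P) => [|x]; last by rewrite inE.
apply: eq_bigr => a Pa; rewrite sum1_card; apply: eq_card => x.
rewrite inE [in RHS]unfold_in /= inE /generator.
have [xa | ne_xa] := eqVneq <[x]>%G a; first by move: Pa; rewrite -xa /= eqxx andbT.
by rewrite andbF; apply: contraNF ne_xa => /eqP ax; apply/eqP/val_inj/esym.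
Qed.

Lemma sum_card_generators_pobj b : obj b ->
  \sum_(a | obj a && (a \subset b)) #|[set x | generator a x]| = #|b| - 1.
Proof.
move=> ob; rewrite sum_card_generators (cardsD1 1 b) group1 addKn.
apply: eq_card => x; rewrite !inE /= cycle_subG andbC.
case bx: (x \in b); rewrite ?andbF // (pobj_sub ob) ?cycle_subG //.
by rewrite andbT (sameP eqP trivGP) cycle_subG inE.
Qed.

Lemma card_generators_pgroup a : prime p -> p.-group a -> a != 1%G ->
  (#|[set x | generator a x]|%:R
     = if cyclic a then (p.-1)%:R / p%:R * #|a|%:R else 0 :> rat)%R.
Proof.
move=> p_pr pa nta; have [/cyclicP[x ax] | ncyc] := boolP (cyclic a); last first.
  rewrite (_ : [set x | generator a x] = set0) ?cards0 //; apply/setP => y.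
  by rewrite !inE; apply: contraNF ncyc => /eqP ->; exact: cycle_cyclic.
have [n card_a] := p_natP pa.
have n_gt0 : (0 < n)%N.
  rewrite lt0n; apply: contraNneq nta => n0.
  by apply/eqP/trivGP; rewrite subG1 trivg_card1 card_a n0.
rewrite (eq_card (B := [set y | generator <[x]> y])) => [|y]; last by rewrite !inE ax.
have ox : #[x] = #|a| by rewrite ax.
rewrite -totient_gen ox card_a totient_pfactor // -{2}(prednK n_gt0) expnS !natrM.
by field; rewrite pnatr_eq0 -lt0n prime_gt0.
Qed.

Lemma zetaO_div a b : obj b ->
  ((zetaO G a b)%:R = #|transp G a b|%:R / #|b|%:R :> rat)%R.
Proof. by case/and3P=> sbG _ _; rewrite /zetaO card_lcosets_transp. Qed.

Lemma sum_card_generators_classes : prime p ->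
  (\sum_(a | obj a) #|[set x | generator a x]|%:R / #|G|%:R
     = (p.-1)%:R / p%:R * \sum_(X in conj_classes G (fun H => obj H && cyclic H))
                              1 / (zetaO G (crep X) (crep X))%:R :> rat)%R.
Proof.
move=> p_pr; have cycJ H x : x \in G -> obj (H :^ x)%G && cyclic (H :^ x)%G = obj H && cyclic H.
  by move=> Gx; rewrite pobjJ // cyclicJ.
transitivity (\sum_(a | obj a && cyclic a) (p.-1)%:R / p%:R * #|a|%:R / #|G|%:R : rat)%R.
  rewrite [RHS]big_mkcondr; apply: eq_bigr => a /and3P[_ pa nta].
  by rewrite card_generators_pgroup //; case: (cyclic a); rewrite ?mul0r.
rewrite -(sum_conj_classes (P := fun H => obj H && cyclic H)) ?mulr_sumr => [|//|H x _ _].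
  apply: eq_bigr => X /(crep_conj_classes cycJ) /andP[oX _].
  rewrite zetaO_div // transp_self; field.
  by rewrite !pnatr_eq0 -!lt0n !cardG_gt0 prime_gt0.
by rewrite cardJg.
Qed.

Lemma weighting_O : exists w, is_weighting obj (zetaO G) w.
Proof.
have [|v vP] := triangular_solvable (R := rat) (obj := obj) (c := fun _ _ => 1%R)
  (fun=> #|G|%:R^-1)%R.
  by move=> a _; exact: oner_neq0.
exists (fun b => #|b|%:R * v b)%R => a oa.
rewrite (eq_bigr (fun b => \sum_(g in transp G a b) v b)%R) => [|b ob]; last first.
  by rewrite zetaO_div // sumr_const -[RHS]mulr_natl; field; rewrite cardG_natr_neq0.
rewrite (sum_transp_sup (F := fun _ b => v b) (f := fun=> (#|G|%:R^-1)%R)) //.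
  by rewrite mulfV ?cardG_natr_neq0.
by move=> a' oa'; rewrite -(vP a' oa'); apply: eq_bigr => b _; rewrite mul1r.
Qed.

Lemma coweighting_O : is_coweighting obj (zetaO G)
  (fun a => (#|[set x | generator a x]|%:R - (mu a)%:~R) / #|G|%:R)%R.
Proof.
move=> b ob; pose k a : rat := ((#|[set x | generator a x]|%:R - (mu a)%:~R) / #|G|%:R)%R.
rewrite (eq_bigr (fun a => #|b|%:R^-1 * \sum_(g in transp G a b) k a)%R) => [|a oa].
  rewrite -big_distrr /= (sum_transp_sub (F := fun a _ => k a)
                                       (f := fun b => (#|b|%:R / #|G|%:R)%R)) //.
  - by field; rewrite !cardG_natr_neq0.
  - move=> b' ob'; rewrite -mulr_suml sumrB -natr_sum sum_card_generators_pobj //.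
    by rewrite sum_mu_pobj // natrB ?cardG_gt0 // opprK subrK.
  - by move=> b' x _ _; rewrite cardJg.
rewrite zetaO_div // sumr_const -[(k a *+ _)%R]mulr_natl /k.
by field; rewrite !pnatr_eq0 -!lt0n !cardG_gt0.
Qed.

Lemma euler_char_O : prime p ->
  euler_char obj (zetaO G)
    (chiT + (p.-1)%:R / p%:R *
       \sum_(X in conj_classes G (fun H => obj H && cyclic H))
          1 / (zetaO G (crep X) (crep X))%:R)%R.
Proof.
move=> p_pr; have [w wW] := weighting_O; apply: euler_char_coweighting wW coweighting_O _.
rewrite chiT_sum -sum_card_generators_classes // -big_split /=.
by apply: eq_bigr => a _; field; rewrite cardG_natr_neq0.
Qed.

End Categories.

Local Close Scope group_scope.

Theorem theorem1p1 (gT : finGroupType) (G : {group gT}) (p : nat) (hp : prime p) :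
  let obj := pobj p G in
  let chiT := (\sum_(X in conj_classes G obj)
                 - (mu (crep X))%:~R / (zetaT G (crep X) (crep X))%:R)%R : rat in
  let chiL := (\sum_(X in conj_classes G obj)
                 - (mu (crep X))%:~R / (zetaL p G (crep X) (crep X))%:R)%R : rat in
  let chiF := (\sum_(X in conj_classes G obj)
                 - (mu (crep X))%:~R / (zetaF G (crep X) (crep X))%:R)%R : rat in
  [/\ euler_char obj (@zetaT gT G) chiT,
      euler_char obj (@zetaL gT p G) chiL,
      euler_char obj (@zetaF gT G) chiF &
    [/\
      euler_char obj (@zetaS gT) (#|G|%:R * chiT)%R,
      euler_char obj (@zetaFt gT G) chiF
    & euler_char obj (@zetaO gT G)
        (chiT + (p.-1)%:R / p%:R *
           \sum_(X in conj_classes G (fun H => obj H && cyclic H))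
              1 / (zetaO G (crep X) (crep X))%:R)%R]].
Proof.
move=> obj chiT chiL chiF.
split; [exact: euler_char_T | exact: euler_char_L | exact: euler_char_F |].
split; [exact: euler_char_S | exact: euler_char_Ft | exact: euler_char_O].
Qed.
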